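(* Let $\mathbb K$ be a field of characteristic zero and $A=\bigoplus_{i=1}^k M_{d_i}(\mathbb K)$. Let $\epsilon_0:=\bigoplus_i d_i\mathrm{Tr}_{M_{d_i}}$ (the Frobenius linear form of the unique symmetric special Frobenius structure on $A$) and, for an invertible $u=\bigoplus_i u_i\in A$, consider the twisted Frobenius structure $(a,b)_u:=\epsilon_0(uab)$. Then its F-dimension and F-Hilbert series are $$\dim_1(A)=\sum_{i=1}^k\mathrm{Tr}(u_i)\mathrm{Tr}(u_i^{-1}),\qquad \dim_x(A)=\sum_{i=1}^k\frac{d_i\mathrm{Tr}(u_i)}{1-d_i^{-1}\mathrm{Tr}(u_i^{-1})x},$$ its counit scale factor is $\dim_0(A)=\sum_i d_i\mathrm{Tr}(u_i)$, and it is quasispecial with scale factor $\lambda$ if and only if $\mathrm{Tr}(u_i^{-1})/d_i=\lambda$ for all $i$.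
   Context: A Frobenius algebra is a unital $\mathbb K$-algebra $A$ with a bilinear form $(\ ,\ )$ satisfying $(ab,c)=(a,bc)$ whose induced map $A\to A^*$ is invertible; its inverse is $g=\sum g^1\otimes g^2\in A\otimes A$ with $\sum (a,g^1)g^2=a=\sum g^1(g^2,a)$. Write $\epsilon(a):=(1,a)$ and $\ell:=\sum g^1g^2$. F-dimensions: $\dim_j(A):=\epsilon(\ell^j)$, $\dim_x(A):=\sum_{j\ge0}x^j\dim_j(A)$ (formal power series). Quasispecial with scale factor $\lambda$ means $\ell=\lambda1$ with $\lambda\ne0$; special means $\ell=1$. *)

From HB Require Import structures.
From mathcomp Require Import all_boot all_order all_algebra.
Set Implicit Arguments. Unset Strict Implicit. Unset Printing Implicit Defensive.
Import Order.TTheory GRing.Theory Num.Theory.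
Local Open Scope ring_scope.

Section MatSum.
Variables (K : fieldType) (k : nat) (d : 'I_k -> nat).

Definition alg := forall i : 'I_k, 'M[K]_(d i).

Definition alg_zero : alg := fun i => 0.
Definition alg_one : alg := fun i => 1%:M.
Definition alg_add (a b : alg) : alg := fun i => a i + b i.
Definition alg_mul (a b : alg) : alg := fun i => a i *m b i.
Definition alg_scale (c : K) (a : alg) : alg := fun i => c *: a i.
Definition alg_pow (a : alg) (j : nat) : alg := iter j (alg_mul a) alg_one.

Definition eps0 (a : alg) : K := \sum_(i < k) (d i)%:R * \tr (a i).

Definition twform (u a b : alg) : K := eps0 (alg_mul u (alg_mul a b)).

(* an element g = sum_j g1_j (x) g2_j of A (x) A, given as a finite list of
   simple tensors, is the inverse of the induced map A -> A^* iff
   sum (a, g1) g2 = a  and  sum g1 (g2, a) = a for all a *)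
Definition is_copairing (B : alg -> alg -> K) (g : seq (alg * alg)) : Prop :=
  (forall a, foldr (fun p acc => alg_add (alg_scale (B a p.1) p.2) acc) alg_zero g = a) /\
  (forall a, foldr (fun p acc => alg_add (alg_scale (B p.2 a) p.1) acc) alg_zero g = a).

Definition ell (g : seq (alg * alg)) : alg :=
  foldr (fun p acc => alg_add (alg_mul p.1 p.2) acc) alg_zero g.

Definition counit (B : alg -> alg -> K) (a : alg) : K := B alg_one a.

Definition Fdim (B : alg -> alg -> K) (g : seq (alg * alg)) (j : nat) : K :=
  counit B (alg_pow (ell g) j).

Definition quasispecial_with (g : seq (alg * alg)) (lam : K) : Prop :=
  ell g = alg_scale lam alg_one /\ lam != 0.

End MatSum.

From HB Require Import structures.
From mathcomp Require Import all_boot all_order all_algebra.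
From Stdlib Require Import FunctionalExtensionality.
Import Order.TTheory GRing.Theory Num.Theory.
Set Implicit Arguments. Unset Strict Implicit. Unset Printing Implicit Defensive.
Local Open Scope ring_scope.

(* Any two copairings of a form give the same element [ell] (a one-line
   computation using the two copairing identities), so it suffices to compute
   [ell] for one explicit copairing.  For [(a, b)_u] the matrix units [E_pq]
   of each block, paired with [d_i^-1 u_i^-1 E_qp], form one; then
   [ell_i = sum_pq E_pq d_i^-1 u_i^-1 E_qp = d_i^-1 Tr(u_i^-1) 1], which is
   central, so [ell^j] and [eps(ell^j)] are read off blockwise. *)

Section MatrixUnits.
Variable R : pzRingType.

Lemma delta_mulmxE m n p (i : 'I_m) (j : 'I_n) (A : 'M[R]_(n, p)) r c :
  (delta_mx i j *m A) r c = (r == i)%:R * A j c.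
Proof.
rewrite !mxE (bigD1 j) //= big1 => [|s /negPf ns]; rewrite !mxE ?eqxx ?ns.
  by rewrite andbT addr0.
by rewrite andbF mul0r.
Qed.

Lemma mulmx_deltaE m n p (A : 'M[R]_(m, n)) (i : 'I_n) (j : 'I_p) r c :
  (A *m delta_mx i j) r c = A r i * (c == j)%:R.
Proof.
rewrite !mxE (bigD1 i) //= big1 => [|s /negPf ns]; rewrite !mxE ?eqxx ?ns.
  by rewrite addr0.
by rewrite mulr0.
Qed.

Lemma delta_mulmx_delta m n p q (i : 'I_m) (j : 'I_n) (A : 'M[R]_(n, p))
    (j' : 'I_p) (l : 'I_q) :
  delta_mx i j *m A *m delta_mx j' l = A j j' *: delta_mx i l.
Proof.
apply/matrixP => r c; rewrite mulmx_deltaE delta_mulmxE !mxE.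
by rewrite -(commr_nat (A j j')) -mulrA -natrM mulnb.
Qed.

Lemma mxtrace_mul_delta n (A : 'M[R]_n) (i j : 'I_n) :
  \tr (A *m delta_mx i j) = A j i.
Proof.
rewrite /mxtrace (bigD1 j) //= big1 => [|s /negPf ns]; rewrite mulmx_deltaE.
  by rewrite eqxx mulr1 addr0.
by rewrite ns mulr0.
Qed.

Lemma sum_delta_conj n (A : 'M[R]_n) :
  \sum_(p < n) \sum_(q < n) delta_mx p q *m A *m delta_mx q p = \tr A *: 1%:M.
Proof.
rewrite mx1_sum_delta scaler_sumr; apply: eq_bigr => p _.
by rewrite /mxtrace scaler_suml; apply: eq_bigr => q _; rewrite delta_mulmx_delta.
Qed.

End MatrixUnits.

Section Blocks.
Variables (K : fieldType) (k : nat) (d : 'I_k -> nat).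
Local Notation alg := (alg K d).

Lemma alg_ext (a b : alg) : (forall i, a i = b i) -> a = b.
Proof. exact: functional_extensionality_dep. Qed.

Lemma foldr_alg_addE (T : Type) (F : T -> alg) (s : seq T) i :
  foldr (fun x acc => alg_add (F x) acc) (alg_zero K d) s i = \sum_(x <- s) F x i.
Proof. by elim: s => [|x s IH] /=; rewrite ?big_nil // big_cons -IH. Qed.

Lemma copairingP (B : alg -> alg -> K) (g : seq (alg * alg)) :
  is_copairing B g <->
  (forall a i, \sum_(x <- g) B a x.1 *: x.2 i = a i) /\
  (forall a i, \sum_(x <- g) B x.2 a *: x.1 i = a i).
Proof.
split=> [[g1 g2] | [g1 g2]].
  by split=> a i; [rewrite -{2}(g1 a) | rewrite -{2}(g2 a)]; rewrite foldr_alg_addE.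
split=> a; apply: alg_ext => i; rewrite foldr_alg_addE; [exact: g1 | exact: g2].
Qed.

Lemma ellE (g : seq (alg * alg)) i : ell g i = \sum_(x <- g) x.1 i *m x.2 i.
Proof. exact: foldr_alg_addE. Qed.

Lemma ell_copairing_unique (B : alg -> alg -> K) (g h : seq (alg * alg)) :
  is_copairing B g -> is_copairing B h -> ell g = ell h.
Proof.
move=> /copairingP[_ g2] /copairingP[h1 _]; apply: alg_ext => i; rewrite !ellE.
transitivity (\sum_(x <- g) \sum_(z <- h) B x.2 z.1 *: (x.1 i *m z.2 i)).
  apply: eq_bigr => x _; rewrite -{1}(h1 x.2 i) mulmx_sumr.
  by apply: eq_bigr => z _; rewrite scalemxAr.
rewrite exchange_big; apply: eq_bigr => z _.
by rewrite -(g2 z.1 i) mulmx_suml; apply: eq_bigr => x _; rewrite scalemxAl.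
Qed.

Definition alg_scalar (c : 'I_k -> K) : alg := fun i => c i *: 1%:M.

Lemma alg_pow_scalar c j :
  alg_pow (alg_scalar c) j = alg_scalar (fun i => c i ^+ j).
Proof.
elim: j => [|j IH]; apply: alg_ext => i; first by rewrite /alg_scalar scale1r.
rewrite /alg_pow /= -/(alg_pow _ j) IH /alg_mul /alg_scalar.
by rewrite -scalemxAl mul1mx scalerA exprS.
Qed.

Lemma eq_alg_scalar (c c' : 'I_k -> K) : (forall i, (0 < d i)%N) ->
  alg_scalar c = alg_scalar c' <-> (forall i, c i = c' i).
Proof.
move=> d_gt0; split=> [E i | E]; last by apply: alg_ext => i; rewrite /alg_scalar E.
have /matrixP/(_ (Ordinal (d_gt0 i)) (Ordinal (d_gt0 i))) := congr1 (fun a => a i) E.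
by rewrite !mxE eqxx !mulr1.
Qed.

Lemma eps0_supported (a : alg) i :
  (forall j, j != i -> a j = 0) -> eps0 a = (d i)%:R * \tr (a i).
Proof.
move=> a0; rewrite /eps0 (bigD1 i) //= big1 ?addr0 // => j /a0 ->.
by rewrite mxtrace0 mulr0.
Qed.

Lemma Fdim_scalar (u : alg) g c j : ell g = alg_scalar c ->
  Fdim (twform u) g j = \sum_(i < k) (d i)%:R * \tr (u i) * c i ^+ j.
Proof.
move=> ell_g; rewrite /Fdim /counit /twform ell_g alg_pow_scalar /eps0.
apply: eq_bigr => i _; rewrite /alg_mul /alg_one /alg_scalar mul1mx.
by rewrite -scalemxAr mulmx1 mxtraceZ mulrCA mulrC.
Qed.

Definition alg_delta (i : 'I_k) (p q : 'I_(d i)) : alg :=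
  fun j => \matrix_(r, s) ((i == j) && (r == p :> nat) && (s == q :> nat))%:R.

Arguments alg_delta : clear implicits.

Lemma alg_delta_id i p q : alg_delta i p q i = delta_mx p q.
Proof. by apply/matrixP => r s; rewrite !mxE eqxx. Qed.

Lemma alg_delta_neq i j p q : i != j -> alg_delta i p q j = 0.
Proof. by move=> ij; apply/matrixP => r s; rewrite !mxE (negPf ij). Qed.

End Blocks.

Arguments alg_scalar {K k d} c.
Arguments alg_delta {K k d} i p q.

Section TwistedForm.
Variables (K : fieldType) (k : nat) (d : 'I_k -> nat) (u : alg K d).
Hypotheses (d_neq0 : forall i, (d i)%:R != 0 :> K)
           (u_unit : forall i, u i \in unitmx).
Local Notation alg := (alg K d).

Definition twform_dual i (p q : 'I_(d i)) : alg :=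
  alg_mul (fun j => (d j)%:R^-1 *: invmx (u j)) (alg_delta i q p).

Arguments twform_dual : clear implicits.

Definition twform_copairing : seq (alg * alg) :=
  flatten [seq flatten [seq [seq (alg_delta i p q, twform_dual i p q)
    | q <- index_enum 'I_(d i)] | p <- index_enum 'I_(d i)] | i <- index_enum 'I_k].

Lemma twform_dual_neq i j p q : i != j -> twform_dual i p q j = 0.
Proof. by move=> ij; rewrite /twform_dual /alg_mul alg_delta_neq // mulmx0. Qed.

Lemma big_twform_copairing i0 (F : alg * alg -> 'M[K]_(d i0)) :
  (forall i p q, i != i0 -> F (alg_delta i p q, twform_dual i p q) = 0) ->
  \sum_(x <- twform_copairing) F x =
    \sum_(p < d i0) \sum_(q < d i0) F (alg_delta i0 p q, twform_dual i0 p q).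
Proof.
move=> F0; rewrite big_flatten big_map (bigD1 i0) //= [X in _ + X]big1 ?addr0.
  by rewrite big_flatten big_map; apply: eq_bigr => p _; rewrite big_map.
move=> i ni; rewrite big_flatten big_map big1 // => p _.
by rewrite big_map big1 // => q _; apply: F0.
Qed.

Lemma twform_delta_r a i p q :
  twform u a (alg_delta i p q) = (d i)%:R * (u i *m a i) q p.
Proof.
rewrite /twform (@eps0_supported _ _ _ _ i) => [|j ij]; rewrite /alg_mul.
  by rewrite alg_delta_id mulmxA mxtrace_mul_delta.
by rewrite alg_delta_neq 1?eq_sym // !mulmx0.
Qed.

Lemma twform_dual_l a i p q : twform u (twform_dual i p q) a = a i p q.
Proof.
rewrite /twform (@eps0_supported _ _ _ _ i) => [|j ij]; rewrite /alg_mul.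
  rewrite /twform_dual /alg_mul alg_delta_id -!scalemxAl -scalemxAr mxtraceZ.
  rewrite !mulmxA mulmxV // mul1mx mulrA mulfV // mul1r.
  by rewrite mxtrace_mulC mxtrace_mul_delta.
by rewrite twform_dual_neq 1?eq_sym // mul0mx mulmx0.
Qed.

Lemma twform_copairing_l a i0 :
  \sum_(x <- twform_copairing) twform u a x.1 *: x.2 i0 = a i0.
Proof.
rewrite big_twform_copairing => [|i p q ni]; last first.
  by rewrite /= twform_dual_neq // scaler0.
transitivity (invmx (u i0) *m
  \sum_(p < d i0) \sum_(q < d i0) (u i0 *m a i0) q p *: delta_mx q p).
  rewrite mulmx_sumr; apply: eq_bigr => p _; rewrite mulmx_sumr.
  apply: eq_bigr => q _; rewrite /= twform_delta_r /twform_dual /alg_mul alg_delta_id.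
  by rewrite -scalemxAl scalerA mulrAC mulfV // mul1r scalemxAr.
by rewrite exchange_big -matrix_sum_delta mulKmx.
Qed.

Lemma twform_copairing_r a i0 :
  \sum_(x <- twform_copairing) twform u x.2 a *: x.1 i0 = a i0.
Proof.
rewrite big_twform_copairing => [|i p q ni]; last first.
  by rewrite /= alg_delta_neq // scaler0.
rewrite [RHS]matrix_sum_delta; apply: eq_bigr => p _; apply: eq_bigr => q _.
by rewrite /= twform_dual_l alg_delta_id.
Qed.

Lemma is_copairing_twform : is_copairing (twform u) twform_copairing.
Proof.
by apply/copairingP; split=> a i; [apply: twform_copairing_l | apply: twform_copairing_r].
Qed.

Lemma ell_twform_copairing :
  ell twform_copairing = alg_scalar (fun i => (d i)%:R^-1 * \tr (invmx (u i))).
Proof.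
apply: alg_ext => i0; rewrite ellE big_twform_copairing => [|i p q ni]; last first.
  by rewrite /= alg_delta_neq // mul0mx.
rewrite /alg_scalar -mxtraceZ -sum_delta_conj.
apply: eq_bigr => p _; apply: eq_bigr => q _.
by rewrite /= /twform_dual /alg_mul !alg_delta_id mulmxA.
Qed.

Lemma ell_twform g : is_copairing (twform u) g ->
  ell g = alg_scalar (fun i => (d i)%:R^-1 * \tr (invmx (u i))).
Proof.
move=> g_cop; rewrite -ell_twform_copairing.
exact: ell_copairing_unique g_cop is_copairing_twform.
Qed.

End TwistedForm.

Theorem mainTheorem4 (K : fieldType) (k : nat) (d : 'I_k -> nat)
    (charK0 : [pchar K] =i pred0)
    (d_pos : forall i, (0 < d i)%N)
    (u : alg K d) (u_unit : forall i, u i \in unitmx) :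
  let B := twform u in
  (exists g, is_copairing B g) /\
  forall g, is_copairing B g ->
    [/\ Fdim B g 1 = \sum_(i < k) \tr (u i) * \tr (invmx (u i)),
        (forall j : nat, Fdim B g j =
           \sum_(i < k) (d i)%:R * \tr (u i) * ((d i)%:R^-1 * \tr (invmx (u i))) ^+ j),
        Fdim B g 0 = \sum_(i < k) (d i)%:R * \tr (u i)
      & forall lam : K, quasispecial_with g lam <->
          (lam != 0 /\ forall i, \tr (invmx (u i)) / (d i)%:R = lam)].
Proof.
move=> B; have d_neq0 i : (d i)%:R != 0 :> K.
  by move/pcharf0P: charK0 => ->; rewrite -lt0n.
split; first by exists (twform_copairing u); apply: is_copairing_twform.
move=> g /(ell_twform d_neq0 u_unit) ell_g; split.
- rewrite (Fdim_scalar _ _ ell_g); apply: eq_bigr => i _.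
  by rewrite expr1 -mulrA mulrCA mulVKf.
- by move=> j; rewrite (Fdim_scalar _ _ ell_g).
- by rewrite (Fdim_scalar _ _ ell_g); apply: eq_bigr => i _; rewrite expr0 mulr1.
move=> lam; rewrite /quasispecial_with ell_g.
rewrite -[alg_scale _ _]/(alg_scalar (fun=> lam)).
split=> [[/(eq_alg_scalar _ _ d_pos) E lam0] | [lam0 E]]; split=> //.
  by move=> i; rewrite -(E i) mulrC.
by apply/(eq_alg_scalar _ _ d_pos) => i; rewrite -(E i) mulrC.
Qed.
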